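(* For every $n\ge1$, letting $k_n=\lceil\log_2 n\rceil$, $$c_n=2^{k_n-1}\,\mathsf{T}\!\left(\frac{n}{2^{k_n-1}}-1\right),$$ where $\mathsf{T}:[0,1]\to\mathbb{R}$ is the Takagi (Blancmange) function $\mathsf{T}(x)=\sum_{i=0}^{\infty}2^{-i}s(2^i x)$ and $s(x)=\min_{z\in\mathbb{Z}}|x-z|$.
   Context: Bifurcating trees: rooted trees in which every internal node has exactly two children; $\mathcal{T}_n$ is the set of isomorphism classes of bifurcating trees with $n$ leaves. For a node $w$, $\kappa_T(w)$ is its number of descendant leaves. The Colless index is $\mathcal{C}(T)=\sum_{v}|\kappa_T(v_1)-\kappa_T(v_2)|$, summed over internal nodes $v$ with children $v_1,v_2$; $c_n=\min\{\mathcal{C}(T):T\in\mathcal{T}_n\}$. (For $n=1$, $k_n=0$ and the argument of $\mathsf{T}$ is $1$.) *)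

From Stdlib Require Import Reals ZArith Arith Lia.
Open Scope R_scope.

Inductive btree : Type :=
| Leaf : btree
| Node : btree -> btree -> btree.

Fixpoint leaves (t : btree) : nat :=
  match t with
  | Leaf => 1%nat
  | Node l r => (leaves l + leaves r)%nat
  end.

Fixpoint colless (t : btree) : nat :=
  match t with
  | Leaf => 0%nat
  | Node l r =>
      (colless l + colless r
       + Z.abs_nat (Z.of_nat (leaves l) - Z.of_nat (leaves r)))%nat
  end.

Definition is_min_colless (n c : nat) : Prop :=
  (exists t, leaves t = n /\ colless t = c) /\
  (forall t, leaves t = n -> (c <= colless t)%nat).

(* s(x) = min_{z in Z} |x - z| : distance to the nearest integer
   (Int_part = floor) *)
Definition sdist (x : R) : R :=
  Rmin (x - IZR (Int_part x)) (IZR (Int_part x) + 1 - x).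

Definition takagi_is (x l : R) : Prop :=
  infinite_sum (fun i : nat => / 2 ^ i * sdist (2 ^ i * x)) l.

From Stdlib Require Import Reals ZArith Arith Lia Lra.

(* Write d_j(n) for the distance from n to the nearest multiple of 2^j and
   colless_min n = d_1(n) + ... + d_K(n) with K = ceil(log2 n) - 1.

   Splitting n into ceil(n/2) and floor(n/2) splits
   d_(j+1)(n) into d_j of the two halves, so colless_min satisfies the
   recursion of the maximally balanced tree:
     colless_min n = colless_min (ceil(n/2)) + colless_min (floor(n/2)) + n mod 2.
   Hence that tree attains colless_min n, and a strong induction (regrouping
   the halves of a and b into the halves of a + b) gives
     colless_min (a + b) <= colless_min a + colless_min b + |a - b|,
   which shows that no tree does better.

   Analytic part.  2^j * s(n / 2^j) = d_j(n), so 2^K * T(n / 2^K) is the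
   finite sum colless_min n, the Takagi terms vanishing beyond index K; since
   T is 1-periodic, T(n / 2^K - 1) = T(n / 2^K), which is the corollary. *)

Open Scope nat_scope.

Definition dyadic_gap (j n : nat) : nat :=
  Nat.min (n mod 2 ^ j) (2 ^ j - n mod 2 ^ j).

Fixpoint takagi_nat (K n : nat) : nat :=
  match K with
  | 0 => 0
  | S K' => takagi_nat K' n + dyadic_gap (S K') n
  end.

Definition colless_min (n : nat) : nat := takagi_nat (Nat.log2_up n - 1) n.

Lemma dyadic_gap_halves j n : 1 <= j ->
  dyadic_gap (S j) n = dyadic_gap j (n - n / 2) + dyadic_gap j (n / 2).
Proof.
  intros Hj. unfold dyadic_gap.
  rewrite Nat.pow_succ_r'.
  set (P := 2 ^ j).
  assert (HP : P = 2 * 2 ^ (j - 1)).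
  { unfold P. replace j with (S (j - 1)) at 1 by lia. apply Nat.pow_succ_r'. }
  pose proof (Nat.pow_nonzero 2 (j - 1) ltac:(lia)).
  pose proof (Nat.div_mod_eq n 2) as Hn2. pose proof (Nat.mod_upper_bound n 2).
  set (b := n / 2) in *.
  pose proof (Nat.div_mod_eq b P) as HbP. pose proof (Nat.mod_upper_bound b P).
  set (q := b / P) in *. set (r := b mod P) in *.
  assert (Hmod : n mod (2 * P) = 2 * r + n mod 2).
  { symmetry. apply (Nat.mod_unique _ _ q); lia. }
  rewrite Hmod.
  assert (n mod 2 = 0 \/ n mod 2 = 1) as [Heven | Hodd] by lia.
  -
    replace (n - b) with b by lia. fold r. lia.
  -
    assert (r + 1 < P \/ r + 1 = P) as [Hr | Hr] by lia.
    + assert ((n - b) mod P = r + 1) as ->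
        by (symmetry; apply (Nat.mod_unique _ _ q); lia).
      lia.
    + assert ((n - b) mod P = 0) as ->
        by (symmetry; apply (Nat.mod_unique _ _ (q + 1)); lia).
      lia.
Qed.

(* The partial Takagi sums obey the halving recursion; the first term
   dyadic_gap 1 n is the parity of n. *)
Lemma takagi_nat_halves K n :
  takagi_nat (S K) n = n mod 2 + takagi_nat K (n - n / 2) + takagi_nat K (n / 2).
Proof.
  induction K as [|K IH].
  - cbn [takagi_nat]. unfold dyadic_gap. rewrite Nat.pow_1_r.
    pose proof (Nat.div_mod_eq n 2). pose proof (Nat.mod_upper_bound n 2). lia.
  - change (takagi_nat (S (S K)) n) with (takagi_nat (S K) n + dyadic_gap (S (S K)) n).
    rewrite IH, dyadic_gap_halves by lia. cbn [takagi_nat]. lia.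
Qed.

Lemma dyadic_gap_pow2 j : dyadic_gap j (2 ^ j) = 0.
Proof. unfold dyadic_gap. rewrite Nat.Div0.mod_same. lia. Qed.

Lemma colless_min_halves n : 2 <= n ->
  colless_min n = colless_min (n - n / 2) + colless_min (n / 2) + n mod 2.
Proof.
  intros Hn.
  destruct (Nat.eq_dec n 2) as [-> | Hn2]; [reflexivity |].
  pose proof (Nat.log2_up_spec n ltac:(lia)) as [Hlo Hhi].
  destruct (Nat.log2_up n) as [| [| m]] eqn:Hlog; [cbn in *; lia | cbn in *; lia |].
  cbn [Nat.pred] in Hlo. rewrite Nat.pow_succ_r' in Hlo, Hhi. rewrite Nat.pow_succ_r' in Hhi.
  pose proof (Nat.pow_nonzero 2 m ltac:(lia)).
  pose proof (Nat.div_mod_eq n 2). pose proof (Nat.mod_upper_bound n 2).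
  assert (Hup : colless_min (n - n / 2) = takagi_nat m (n - n / 2)).
  { unfold colless_min. rewrite (Nat.log2_up_unique (n - n / 2) (S m)); [f_equal; lia | lia |].
    cbn [Nat.pred]. rewrite Nat.pow_succ_r'. lia. }
  assert (Hdown : colless_min (n / 2) = takagi_nat m (n / 2)).
  { assert (n / 2 = 2 ^ m \/ 2 ^ m < n / 2) as [E | E] by lia.
    - (* the lower half is the power 2^m, whose last term dyadic_gap m vanishes *)
      unfold colless_min. rewrite E, Nat.log2_up_pow2 by lia.
      destruct m as [| m']; [reflexivity |].
      replace (S m' - 1) with m' by lia. cbn [takagi_nat]. rewrite dyadic_gap_pow2. lia.
    - unfold colless_min. rewrite (Nat.log2_up_unique (n / 2) (S m)); [f_equal; lia | lia |].
      cbn [Nat.pred]. rewrite Nat.pow_succ_r'. lia. }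
  unfold colless_min at 1. rewrite Hlog, Hup, Hdown.
  replace (S (S m) - 1) with (S m) by lia. rewrite takagi_nat_halves. lia.
Qed.

Lemma colless_min_balanced_split x y : 2 <= x + y -> x <= y + 1 -> y <= x + 1 ->
  colless_min (x + y) = colless_min x + colless_min y + (x + y) mod 2.
Proof.
  intros Hs Hxy Hyx. rewrite colless_min_halves by exact Hs.
  pose proof (Nat.div_mod_eq (x + y) 2). pose proof (Nat.mod_upper_bound (x + y) 2).
  assert ((x = x + y - (x + y) / 2 /\ y = (x + y) / 2) \/
          (y = x + y - (x + y) / 2 /\ x = (x + y) / 2)) as [[Ex Ey] | [Ey Ex]] by lia.
  - rewrite <- Ex, <- Ey. reflexivity.
  - rewrite <- Ey, <- Ex. lia.
Qed.

Lemma colless_min_1 : colless_min 1 = 0.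
Proof. reflexivity. Qed.

(* Proof by strong induction on a + b,
   splitting both a and b into halves and regrouping them into the two halves
   of a + b. *)
Lemma colless_min_join a b : 1 <= a -> 1 <= b ->
  colless_min (a + b) <= colless_min a + colless_min b + ((a - b) + (b - a)).
Proof.
  remember (a + b) as s eqn:Hs. revert a b Hs.
  induction s as [s IH] using lt_wf_ind.
  assert (Hle : forall a b, s = a + b -> 1 <= b -> b <= a ->
            colless_min s <= colless_min a + colless_min b + ((a - b) + (b - a))).
  { intros a b -> Hb Hba.
    pose proof (Nat.div_mod_eq a 2). pose proof (Nat.mod_upper_bound a 2).
    pose proof (Nat.div_mod_eq b 2). pose proof (Nat.mod_upper_bound b 2).
    destruct (Nat.eq_dec a 1) as [-> | Ha1].
    { replace b with 1 by lia. cbv. lia. }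
    assert (Hsplit_a : colless_min a = colless_min (a - a / 2) + colless_min (a / 2) + a mod 2)
      by (apply colless_min_halves; lia).
    destruct (Nat.eq_dec b 1) as [-> | Hb1].
    - (* a + 1 = ceil(a/2) + (floor(a/2) + 1) *)
      assert (Hsplit : colless_min (a + 1)
                = colless_min (a - a / 2) + colless_min (a / 2 + 1) + (a + 1) mod 2).
      { replace (a + 1) with ((a - a / 2) + (a / 2 + 1)) at 1 by lia.
        rewrite colless_min_balanced_split by lia. do 2 f_equal. lia. }
      assert (Hrec : colless_min (a / 2 + 1)
                <= colless_min (a / 2) + colless_min 1 + ((a / 2 - 1) + (1 - a / 2)))
        by (apply (IH (a / 2 + 1)); lia).
      pose proof (Nat.mod_upper_bound (a + 1) 2).
      rewrite colless_min_1 in *. lia.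
    - (* a + b = (ceil(a/2) + floor(b/2)) + (floor(a/2) + ceil(b/2)) *)
      assert (Hsplit_b : colless_min b = colless_min (b - b / 2) + colless_min (b / 2) + b mod 2)
        by (apply colless_min_halves; lia).
      assert (Hsplit : colless_min (a + b)
                = colless_min (a - a / 2 + b / 2) + colless_min (a / 2 + (b - b / 2))
                  + (a + b) mod 2).
      { replace (a + b) with ((a - a / 2 + b / 2) + (a / 2 + (b - b / 2))) at 1 2 by lia.
        apply colless_min_balanced_split; lia. }
      assert (Hrec1 := IH (a - a / 2 + b / 2) ltac:(lia) (a - a / 2) (b / 2) eq_refl
                        ltac:(lia) ltac:(lia)).
      assert (Hrec2 := IH (a / 2 + (b - b / 2)) ltac:(lia) (a / 2) (b - b / 2) eq_refl
                        ltac:(lia) ltac:(lia)).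
      pose proof (Nat.mod_upper_bound (a + b) 2).
      pose proof (Nat.div_mod_eq (a + b) 2).
      lia. }
  intros a b Hs Ha Hb.
  destruct (Nat.le_ge_cases b a) as [Hba | Hab].
  - apply Hle; lia.
  - specialize (Hle b a ltac:(lia) Ha Hab). lia.
Qed.

Lemma leaves_pos t : 1 <= leaves t.
Proof. induction t; cbn; lia. Qed.

Lemma colless_min_le_colless t : colless_min (leaves t) <= colless t.
Proof.
  induction t as [| l IHl r IHr]; [cbn; lia |].
  cbn [leaves colless].
  pose proof (colless_min_join (leaves l) (leaves r) (leaves_pos l) (leaves_pos r)).
  lia.
Qed.

Lemma balanced_tree_exists n : 1 <= n ->
  exists t, leaves t = n /\ colless t = colless_min n.
Proof.
  induction n as [n IH] using lt_wf_ind. intros Hn.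
  destruct (Nat.eq_dec n 1) as [-> | Hn1]; [now exists Leaf |].
  pose proof (Nat.div_mod_eq n 2). pose proof (Nat.mod_upper_bound n 2).
  destruct (IH (n - n / 2) ltac:(lia) ltac:(lia)) as [tu [Hlu Hcu]].
  destruct (IH (n / 2) ltac:(lia) ltac:(lia)) as [td [Hld Hcd]].
  exists (Node tu td). cbn [leaves colless].
  rewrite Hlu, Hld, Hcu, Hcd, (colless_min_halves n) by lia. lia.
Qed.

Theorem colless_min_is_min n : 1 <= n -> is_min_colless n (colless_min n).
Proof.
  intros Hn. split.
  - now apply balanced_tree_exists.
  - intros t <-. apply colless_min_le_colless.
Qed.

Open Scope R_scope.

Definition takagi_term (x : R) (i : nat) : R := / 2 ^ i * sdist (2 ^ i * x).

Lemma INR_pow2 j : INR (2 ^ j) = 2 ^ j.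
Proof. rewrite pow_INR. reflexivity. Qed.

Lemma Rmin_scale c x y : 0 <= c -> c * Rmin x y = Rmin (c * x) (c * y).
Proof. intros Hc. unfold Rmin. repeat destruct Rle_dec; nra. Qed.

Lemma sdist_frac q x : 0 <= x < 1 -> sdist (INR q + x) = Rmin x (1 - x).
Proof.
  intros Hx. unfold sdist.
  assert (Hint : Int_part (INR q + x) = Z.of_nat q).
  { symmetry. apply Int_part_spec. rewrite <- INR_IZR_INZ. lra. }
  rewrite Hint, <- INR_IZR_INZ. f_equal; ring.
Qed.

Lemma sdist_nat m : sdist (INR m) = 0.
Proof.
  rewrite <- (Rplus_0_r (INR m)), sdist_frac by lra.
  apply Rmin_left. lra.
Qed.

Lemma sdist_shift y m : sdist (y - INR m) = sdist y.
Proof.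
  unfold sdist.
  assert (Hint : Int_part (y - INR m) = (Int_part y - Z.of_nat m)%Z).
  { symmetry. apply Int_part_spec. rewrite minus_IZR, <- INR_IZR_INZ.
    pose proof (base_Int_part y). lra. }
  rewrite Hint, minus_IZR, <- INR_IZR_INZ. f_equal; ring.
Qed.

Lemma INR_min_complement r P : (r <= P)%nat ->
  INR (Nat.min r (P - r)) = Rmin (INR r) (INR P - INR r).
Proof.
  intros HrP. rewrite <- minus_INR by exact HrP.
  destruct (Nat.min_spec r (P - r)) as [[Hlt ->] | [Hge ->]].
  - apply eq_sym, Rmin_left, le_INR. lia.
  - apply eq_sym, Rmin_right, le_INR. exact Hge.
Qed.

Lemma sdist_dyadic j n : 2 ^ j * sdist (INR n / 2 ^ j) = INR (dyadic_gap j n).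
Proof.
  unfold dyadic_gap. rewrite <- INR_pow2.
  set (P := (2 ^ j)%nat).
  assert (HP : (P <> 0)%nat) by (apply Nat.pow_nonzero; lia).
  pose proof (Nat.div_mod_eq n P) as Hdiv. pose proof (Nat.mod_upper_bound n P HP).
  set (q := (n / P)%nat) in *. set (r := (n mod P)%nat) in *.
  assert (HPpos : 0 < INR P) by (apply lt_0_INR; lia).
  assert (Hr : 0 <= INR r < INR P) by (split; [apply pos_INR | apply lt_INR; lia]).
  assert (Hsplit : INR n / INR P = INR q + INR r / INR P).
  { rewrite Hdiv, plus_INR, mult_INR. field. lra. }
  assert (Hfrac : 0 <= INR r / INR P < 1).
  { assert (Hu : INR r / INR P * INR P = INR r) by (field; lra).
    split; nra. }
  rewrite Hsplit, sdist_frac, Rmin_scale, INR_min_complement by (lra || lia).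
  f_equal; field; lra.
Qed.

Lemma takagi_term_half x i : takagi_term (x / 2) (S i) = takagi_term x i / 2.
Proof.
  unfold takagi_term. cbn [pow].
  replace (2 * 2 ^ i * (x / 2)) with (2 ^ i * x) by field.
  field. apply pow_nonzero. lra.
Qed.

Lemma takagi_partial_sum K n :
  2 ^ K * sum_f_R0 (takagi_term (INR n / 2 ^ K)) K = INR (takagi_nat K n).
Proof.
  induction K as [| K IH].
  - cbn. unfold takagi_term. rewrite pow_O, Rdiv_1_r, !Rmult_1_l, sdist_nat. ring.
  - rewrite decomp_sum by lia. cbn [Nat.pred].
    replace (INR n / 2 ^ S K) with ((INR n / 2 ^ K) / 2) by (cbn; field; apply pow_nonzero; lra).
    rewrite (sum_eq _ (fun i => takagi_term (INR n / 2 ^ K) i * / 2))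
      by (intros i _; apply takagi_term_half).
    rewrite <- scal_sum.
    cbn [takagi_nat]. rewrite plus_INR, <- IH, <- sdist_dyadic.
    unfold takagi_term at 1. rewrite pow_O, Rinv_1, !Rmult_1_l.
    replace (INR n / 2 ^ K / 2) with (INR n / 2 ^ S K) by (cbn; field; apply pow_nonzero; lra).
    cbn [pow]. field.
Qed.

Lemma infinite_sum_finite_support s M :
  (forall i, (M < i)%nat -> s i = 0) -> infinite_sum s (sum_f_R0 s M).
Proof.
  intros Hs eps Heps. exists M. intros m Hm.
  assert (Hstable : forall d, sum_f_R0 s (M + d) = sum_f_R0 s M).
  { induction d as [| d IH]; [now rewrite Nat.add_0_r |].
    rewrite Nat.add_succ_r. cbn [sum_f_R0]. rewrite IH, Hs by lia. ring. }
  replace m with (M + (m - M))%nat by lia.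
  rewrite Hstable, Rdist_eq. lra.
Qed.

(* Beyond index K, the point 2^i * n / 2^K is an integer, so the terms vanish. *)
Lemma takagi_term_dyadic_vanish K n i : (K < i)%nat ->
  takagi_term (INR n / 2 ^ K) i = 0.
Proof.
  intros Hi. unfold takagi_term.
  replace (2 ^ i * (INR n / 2 ^ K)) with (INR (n * 2 ^ (i - K))).
  - rewrite sdist_nat. ring.
  - rewrite mult_INR, INR_pow2.
    replace (2 ^ i) with (2 ^ (i - K) * 2 ^ K) by (rewrite <- pow_add; f_equal; lia).
    field. apply pow_nonzero. lra.
Qed.

Lemma takagi_dyadic K n :
  takagi_is (INR n / 2 ^ K) (INR (takagi_nat K n) / 2 ^ K).
Proof.
  assert (Hpow : 2 ^ K <> 0) by (apply pow_nonzero; lra).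
  replace (INR (takagi_nat K n) / 2 ^ K) with (sum_f_R0 (takagi_term (INR n / 2 ^ K)) K)
    by (rewrite <- takagi_partial_sum; field; exact Hpow).
  apply infinite_sum_finite_support. intros i Hi. now apply takagi_term_dyadic_vanish.
Qed.

Lemma takagi_shift x l : takagi_is x l -> takagi_is (x - 1) l.
Proof.
  assert (Hterm : forall i, takagi_term (x - 1) i = takagi_term x i).
  { intros i. unfold takagi_term. f_equal.
    rewrite <- (sdist_shift (2 ^ i * x) (2 ^ i)), INR_pow2. f_equal. ring. }
  intros Hx eps Heps. destruct (Hx eps Heps) as [N HN]. exists N. intros m Hm.
  unfold takagi_is in *. fold (takagi_term (x - 1)).
  rewrite (sum_eq _ _ m (fun i _ => Hterm i)). now apply HN.
Qed.

Theorem corollary4 (n : nat) (hn : (1 <= n)%nat) :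
  exists c : nat, is_min_colless n c /\
    exists T : R,
      takagi_is (INR n / powerRZ 2 (Z.of_nat (Nat.log2_up n) - 1) - 1) T /\
      INR c = powerRZ 2 (Z.of_nat (Nat.log2_up n) - 1) * T.
Proof.
  exists (colless_min n). split; [now apply colless_min_is_min |].
  destruct (Nat.eq_dec n 1) as [-> | Hn1].
  -
    exists (INR (takagi_nat 0 1) / 2 ^ 0). split; [| simpl; field].
    replace (INR 1 / powerRZ 2 (Z.of_nat (Nat.log2_up 1) - 1) - 1) with (INR 1 / 2 ^ 0)
      by (simpl; field).
    apply takagi_dyadic.
  -
    set (K := (Nat.log2_up n - 1)%nat).
    assert (Hpow : powerRZ 2 (Z.of_nat (Nat.log2_up n) - 1) = 2 ^ K).
    { rewrite pow_powerRZ. f_equal. pose proof (Nat.log2_up_le_mono 2 n). cbn in *. lia. }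
    rewrite Hpow.
    exists (INR (colless_min n) / 2 ^ K). split.
    + apply takagi_shift, takagi_dyadic.
    + field. apply pow_nonzero. lra.
Qed.
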